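(* Let $0<\lambda_1<\cdots<\lambda_n$ be real numbers and let $r>0$. Then the $n\times n$ matrices \[ \left[\frac{1}{\mathcal A(\lambda_i,\lambda_j)^r}\right],\quad \left[H(\lambda_i,\lambda_j)^r\right],\quad \left[\frac{1}{\mathcal H_\nu(\lambda_i,\lambda_j)^r}\right]\ (0\leq\nu\leq 1,\ \nu\neq\tfrac12),\quad \left[\frac{1}{\mathcal B_\alpha(\lambda_i,\lambda_j)^r}\right]\ (0<\alpha<\infty) \] are totally positive, and the matrices \[ \left[\frac{1}{\mathcal H_{1/2}(\lambda_i,\lambda_j)^r}\right]\ \left(=\left[\frac{1}{\mathcal B_0(\lambda_i,\lambda_j)^r}\right]\right)\quad\text{and}\quad \left[\frac{1}{\mathcal B_\infty(\lambda_i,\lambda_j)^r}\right] \] are totally nonnegative.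
   Context: For positive reals $a,b$: the arithmetic mean $\mathcal A(a,b)=\frac{a+b}{2}$; the harmonic mean $H(a,b)=\frac{2ab}{a+b}$; the Heinz mean $\mathcal H_\nu(a,b)=\frac{a^\nu b^{1-\nu}+a^{1-\nu}b^\nu}{2}$ for $0\leq\nu\leq1$; the binomial mean $\mathcal B_\alpha(a,b)=\left(\frac{a^\alpha+b^\alpha}{2}\right)^{1/\alpha}$ for real $\alpha\neq0$, with $\mathcal B_0(a,b)=\sqrt{ab}$ and $\mathcal B_\infty(a,b)=\max(a,b)$. All matrices are indexed by $i,j=1,\ldots,n$. A matrix is totally positive (resp. totally nonnegative) if all its minors are positive (resp. nonnegative). *)

From mathcomp Require Import all_boot all_order all_algebra.
From mathcomp Require Import reals exp.
Set Implicit Arguments. Unset Strict Implicit. Unset Printing Implicit Defensive.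
Import Order.TTheory GRing.Theory Num.Theory.
Local Open Scope ring_scope.

Section Means.
Variable R : realType.

Definition amean (a b : R) : R := (a + b) / 2.
Definition hmean (a b : R) : R := 2 * a * b / (a + b).
Definition heinz (nu a b : R) : R :=
  (powR a nu * powR b (1 - nu) + powR a (1 - nu) * powR b nu) / 2.
(* binomial mean, alpha <> 0 *)
Definition binmean (alpha a b : R) : R :=
  powR ((powR a alpha + powR b alpha) / 2) alpha^-1.
Definition binmean0 (a b : R) : R := Num.sqrt (a * b).
Definition binmeanInf (a b : R) : R := Num.max a b.

Definition minor (n k : nat) (A : 'M[R]_n) (f g : 'I_k -> 'I_n) : R :=
  \det (\matrix_(i < k, j < k) A (f i) (g j)).

Definition strictly_incr (n k : nat) (f : 'I_k -> 'I_n) : Prop :=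
  forall i j : 'I_k, (i < j)%N -> (f i < f j)%N.

Definition totally_positive (n : nat) (A : 'M[R]_n) : Prop :=
  forall (k : nat) (f g : 'I_k -> 'I_n),
    (0 < k)%N -> strictly_incr f -> strictly_incr g -> 0 < minor A f g.

Definition totally_nonnegative (n : nat) (A : 'M[R]_n) : Prop :=
  forall (k : nat) (f g : 'I_k -> 'I_n),
    (0 < k)%N -> strictly_incr f -> strictly_incr g -> 0 <= minor A f g.

End Means.

From mathcomp Require Import all_boot all_order all_algebra.
From mathcomp Require Import boolp functions reals normedtype derive realfun exp.
From mathcomp Require Import ring lra.
(* Each matrix is, up to positive diagonal scalings, a generalized Cauchy matrix
   [(x_i + x_j)^-s] with 0 < x_1 < ... < x_n, a rank-one matrix, or a matrix
   [min (w_i, w_j)] with w nonincreasing; these shapes pass to submatrices.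
   For the Cauchy kernel, expand det [(x_i + y_j)^-s] along the first row as a
   function of t = x_1: it is f(t) = sum_j c_j (t + y_j)^-s, which vanishes at
   x_2, ..., x_k. Multiplying by (t + y_k)^s and applying Rolle shows, by
   induction on the number of terms (with s raised to s + 1), that such a sum
   of k terms vanishing at k points is trivial; so f has no zero on (-y_1, x_2).
   As c_1 > 0 by induction on k, f is positive near the pole -y_1, hence at x_1.
   Minors of min matrices are nonnegative by subtracting the second row from the
   first and expanding. *)

Set Implicit Arguments. Unset Strict Implicit. Unset Printing Implicit Defensive.
Import Order.TTheory GRing.Theory Num.Theory numFieldNormedType.Exports.
Local Open Scope ring_scope.

Section CauchyPowerKernel.
Variable R : realType.

Lemma powR_subr1 (x e : R) : 0 < x -> powR x e = powR x (e - 1) * x.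
Proof.
by move=> x0; rewrite -[X in _ * X](powRr1 (ltW x0)) -powRD ?subrK // (gt_eqF x0) implybT.
Qed.

Lemma powRN_le (s x y : R) : 0 <= s -> 0 < x -> x <= y -> powR y (-s) <= powR x (-s).
Proof.
move=> s0 x0 xy; rewrite !powRN lef_pV2 ?posrE ?powR_gt0 ?(lt_le_trans x0) //.
by apply: ge0_ler_powR; rewrite // nnegrE ltW ?(lt_le_trans x0).
Qed.

Lemma is_derive_powR_shift (y e t : R) : 0 < t + y ->
  is_derive t 1 (fun u : R => powR (u + y) e) (e * powR (t + y) (e - 1)).
Proof.
move=> ty; have := @is_derive1_comp R (fun x => powR x e) (shift y) t _ _
  (is_derive1_powR e ty) (is_derive_shift t 1 y).
by rewrite mulr1.
Qed.

Lemma rolle_is_derive (f f' : R -> R) (a b : R) : a < b ->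
  (forall t, a <= t <= b -> is_derive t 1 f (f' t)) -> f a = f b ->
  exists2 c, a < c < b & f' c = 0.
Proof.
move=> ab df fab.
have der t : a <= t <= b -> derivable f t 1 by move=> /df [].
have [c] : exists2 c, c \in `]a, b[ & is_derive c 1 f 0.
  apply: Rolle ab _ _ fab.
- by move=> t; rewrite in_itv /= => /andP[ta tb]; apply: der; rewrite !ltW.
- by apply: derivable_within_continuous => t; rewrite in_itv /=; exact: der.
rewrite in_itv /= => /andP[ac cb] dc0; exists c; first by rewrite ac cb.
have dc : is_derive c 1 f (f' c) by apply: df; rewrite !ltW.
by rewrite -(@derive_val _ _ _ _ _ _ _ dc) (@derive_val _ _ _ _ _ _ _ dc0).
Qed.

Definition pow_comb m (s : R) (c y : 'I_m -> R) (t : R) : R :=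
  \sum_j c j * powR (t + y j) (-s).

Lemma is_derive_pow_comb m s (c y : 'I_m -> R) t : (forall j, 0 < t + y j) ->
  is_derive t 1 (pow_comb s c y) (\sum_j c j * (- s * powR (t + y j) (- s - 1))).
Proof.
move=> ty.
have -> : pow_comb s c y = \sum_j (c j \*: (fun u => powR (u + y j) (-s))).
  by apply/funext => u; rewrite /pow_comb fct_sumE.
exact: is_derive_sum (fun j => is_deriveZ (c j) (is_derive_powR_shift (-s) (ty j))).
Qed.

Lemma is_derive_pow_comb_mulpowR m s b (c y : 'I_m -> R) t :
  0 < t + b -> (forall j, 0 < t + y j) ->
  is_derive t 1 (fun u => pow_comb s c y u * powR (u + b) s)
    (powR (t + b) (s - 1) * pow_comb (s + 1) (fun j => s * (y j - b) * c j) y t).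
Proof.
move=> tb ty.
have := is_deriveM (is_derive_pow_comb s c ty) (is_derive_powR_shift s tb).
move/is_derive_eq; apply.
rewrite /pow_comb /GRing.scale /= (powR_subr1 s tb).
rewrite big_distrl big_distrr big_distrr -big_split /=; apply: eq_bigr => j _.
by rewrite (powR_subr1 (- s) (ty j)) opprD; ring.
Qed.

Lemma incr_ord_inj k (x : 'I_k -> R) :
  {homo x : i j / (i < j)%N >-> i < j} -> injective x.
Proof.
move=> x_incr i j xij; apply: val_inj.
by case: (ltngtP i j) => // /x_incr; rewrite xij ltxx.
Qed.

Lemma incr_ord_le k (x : 'I_k -> R) :
  {homo x : i j / (i < j)%N >-> i < j} -> {homo x : i j / (i <= j)%N >-> i <= j}.
Proof.
by move=> x_incr i j; rewrite leq_eqVlt => /orP[/eqP/val_inj -> // | /x_incr/ltW].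
Qed.

Lemma pow_comb_rolle m s (c y : 'I_m.+1 -> R) (a b : R) : a < b ->
  (forall j, 0 < a + y j) -> pow_comb s c y a = 0 -> pow_comb s c y b = 0 ->
  exists2 t, a < t < b &
    pow_comb (s + 1) (fun j => s * (y (widen_ord (leqnSn m) j) - y ord_max) *
      c (widen_ord (leqnSn m) j)) (y \o widen_ord (leqnSn m)) t = 0.
Proof.
move=> ab a_dom ca cb.
pose w := widen_ord (leqnSn m); pose l := @ord_max m.
have dom u : a <= u -> forall j, 0 < u + y j.
  by move=> au j; apply: lt_le_trans (a_dom j) _; rewrite lerD2r.
(* Multiplying by (u + y_l)^s turns the last term into the constant c_l. *)
pose H u := pow_comb s (c \o w) (y \o w) u * powR (u + y l) s.
have H_root u : a <= u -> pow_comb s c y u = 0 -> H u = - c l.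
  move=> au; rewrite /pow_comb big_ord_recr /= => /eqP; rewrite addr_eq0 => /eqP.
  rewrite /H /pow_comb => ->; rewrite mulNr -mulrA -powRD.
    by rewrite addNr powRr0 mulr1.
  by rewrite (gt_eqF (dom _ au l)) implybT.
have [t /andP[ta tb] dt] : exists2 t, a < t < b & powR (t + y l) (s - 1) *
    pow_comb (s + 1) (fun j => s * (y (w j) - y l) * c (w j)) (y \o w) t = 0.
  apply: (rolle_is_derive (f := H)) => [//|t /andP[au _]|].
    by apply: is_derive_pow_comb_mulpowR => [|j]; apply: dom.
  by rewrite (H_root _ (lexx a) ca) (H_root _ (ltW ab) cb).
exists t; first by rewrite ta tb.
by move: dt => /eqP; rewrite mulf_eq0 gt_eqF ?powR_gt0 ?dom ?ltW //= => /eqP.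
Qed.

Lemma pow_comb_roots_eq0 m : forall s (c y z : 'I_m -> R), 0 < s -> injective y ->
  {homo z : i j / (i < j)%N >-> i < j} -> (forall i j, 0 < z i + y j) ->
  (forall i, pow_comb s c y (z i) = 0) -> forall j, c j = 0.
Proof.
elim: m => [|m IH] s c y z s_gt0 y_inj z_incr zy_gt0 c_roots; first by case.
pose l := @ord_max m; pose w := widen_ord (leqnSn m).
have z0_le i : z ord0 <= z i by apply: incr_ord_le.
have dom t : z ord0 <= t -> forall j, 0 < t + y j.
  by move=> zt j; apply: lt_le_trans (zy_gt0 ord0 j) _; rewrite lerD2r.
have between i : exists t, z (w i) < t < z (lift ord0 i) /\
    pow_comb (s + 1) (fun j => s * (y (w j) - y l) * c (w j)) (y \o w) t = 0.
  have zi : z (w i) < z (lift ord0 i) by apply: z_incr; rewrite /= /bump leq0n add1n.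
  have [t t_in t_root] := pow_comb_rolle zi (dom _ (z0_le _)) (c_roots _) (c_roots _).
  by exists t.
have [t t_spec] := fin_all_exists between.
have d0 : forall j, s * (y (w j) - y l) * c (w j) = 0.
  apply: (IH (s + 1) _ (y \o w) t) => [||a b ab|a b|a]; first by rewrite addr_gt0.
  - by move=> a b /y_inj /(congr1 val) /= /val_inj.
  - have [/andP[_ ta] _] := t_spec a; have [/andP[tb _] _] := t_spec b.
    by apply: lt_trans ta (le_lt_trans _ tb); apply: incr_ord_le.
  - have [/andP[ta _] _] := t_spec a.
    by apply: dom; apply: le_trans (z0_le _) (ltW ta).
  - by have [_ ->] := t_spec a.
have cw j : c (w j) = 0.
  have /eqP := d0 j; rewrite !mulf_eq0 (gt_eqF s_gt0) subr_eq0 /=.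
  case/orP => [/eqP/y_inj/(congr1 val) /= wj | /eqP //].
  by move: (ltn_ord j); rewrite wj ltnn.
have cl : c l = 0.
  have /eqP := c_roots ord0; rewrite /pow_comb big_ord_recr big1 /= => [|j _].
    by rewrite add0r mulf_eq0 (gt_eqF (powR_gt0 _ (dom _ (lexx _) l))) orbF => /eqP.
  by rewrite cw mul0r.
move=> j; case: (unliftP l j) => [j' ->|-> //].
by rewrite (_ : lift l j' = w j') ?cw //; apply: val_inj; exact: lift_max.
Qed.

Lemma pow_comb_gt0_near_pole m (s b : R) (c y : 'I_m.+1 -> R) : 0 < s -> 0 < c ord0 ->
  (forall j, y ord0 < y (lift ord0 j)) -> - y ord0 < b ->
  exists2 t, - y ord0 < t <= b & 0 < pow_comb s c y t.
Proof.
move=> s_gt0 c0_gt0 y_gt b_gt.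
pose B := \sum_(j < m) `|c (lift ord0 j)| * powR (y (lift ord0 j) - y ord0) (-s).
have B_ge0 : 0 <= B by apply: sumr_ge0 => j _; rewrite mulr_ge0 ?powR_ge0.
pose q := c ord0 / (B + 1).
have q_gt0 : 0 < q by rewrite divr_gt0 // ltr_wpDl.
(* With this [d] the pole term [c_0 d^-s] is at least [B + 1], while the others
   stay above [-B]. *)
pose d := Num.min (b + y ord0) (powR q s^-1).
have d_gt0 : 0 < d by rewrite lt_min powR_gt0 // andbT; lra.
have d_le : d <= b + y ord0 by rewrite ge_min lexx.
exists (d - y ord0); first by apply/andP; split; lra.
rewrite /pow_comb big_ord_recl /= subrK.
have head : B + 1 <= c ord0 * powR d (-s).
  have d_pow : powR d s <= q.
    rewrite -[q](powRr1 (ltW q_gt0)) -[1](mulVf (lt0r_neq0 s_gt0)) powRrM.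
    apply: ge0_ler_powR; rewrite ?nnegrE ?(ltW d_gt0) ?(ltW s_gt0) ?powR_ge0 //.
    by rewrite /d ge_min lexx orbT.
  have -> : B + 1 = c ord0 * q^-1 by rewrite /q invf_div mulrC divfK ?lt0r_neq0.
  by rewrite powRN ler_pM2l // lef_pV2 ?posrE ?powR_gt0.
have tail : - B <= \sum_(j < m) c (lift ord0 j) * powR (d - y ord0 + y (lift ord0 j)) (-s).
  rewrite /B -sumrN; apply: ler_sum => j _.
  have yj : 0 < y (lift ord0 j) - y ord0 by rewrite subr_gt0.
  have hP : powR (d - y ord0 + y (lift ord0 j)) (-s) <=
      powR (y (lift ord0 j) - y ord0) (-s) by apply: powRN_le; rewrite ?ltW //; lra.
  have hc : - `|c (lift ord0 j)| <= c (lift ord0 j) by rewrite lerNl ler_normr lexx orbT.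
  have := normr_ge0 (c (lift ord0 j)); have := powR_ge0 (d - y ord0 + y (lift ord0 j)) (-s).
  nra.
lra.
Qed.

Definition cauchy_powR k (s : R) (x y : 'I_k -> R) : 'M[R]_k :=
  \matrix_(i, j) powR (x i + y j) (-s).

Lemma det_cauchy_powR_row0 k s (x y : 'I_k.+1 -> R) (t : R) :
  \det (cauchy_powR s (fun i => if i == ord0 then t else x i) y) =
  pow_comb s (fun j => cofactor (cauchy_powR s x y) ord0 j) y t.
Proof.
rewrite (expand_det_row _ ord0); apply: eq_bigr => j _.
rewrite mxE eqxx mulrC /cofactor; congr (_ * \det _ * _).
by apply/matrixP => a b; rewrite !mxE eq_sym (negbTE (neq_lift _ _)).
Qed.

Lemma det_cauchy_powR_gt0 k : forall s (x y : 'I_k -> R), 0 < s ->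
  {homo x : i j / (i < j)%N >-> i < j} -> {homo y : i j / (i < j)%N >-> i < j} ->
  (forall i j, 0 < x i + y j) -> 0 < \det (cauchy_powR s x y).
Proof.
elim: k => [|k IH] s x y s_gt0 x_incr y_incr xy_gt0; first by rewrite det_mx00.
pose xt t i := if i == ord0 then t else x i.
pose C j := cofactor (cauchy_powR s x y) ord0 j.
have C0_gt0 : 0 < C ord0.
  rewrite /C /cofactor /= expr0 mul1r.
  rewrite (_ : row' _ _ = cauchy_powR s (x \o lift ord0) (y \o lift ord0)); last first.
    by apply/matrixP => a b; rewrite !mxE.
  apply: IH => // [a b ab|a b ab|a b]; last exact: xy_gt0.
    by apply: x_incr; rewrite /= /bump !add1n ltnS.
  by apply: y_incr; rewrite /= /bump !add1n ltnS.
have C_roots i : i != ord0 -> pow_comb s C y (x i) = 0.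
  move=> i0; rewrite -det_cauchy_powR_row0.
  apply: (determinant_alternate (i1 := ord0) (i2 := i)); first by rewrite eq_sym.
  by move=> j; rewrite !mxE /xt eqxx (negbTE i0).
have xt0 : xt (x ord0) = x by apply/funext => i; rewrite /xt; case: eqP => // ->.
rewrite -xt0 det_cauchy_powR_row0 ltNge; apply/negP => comb_le0.
have y_gt j : y ord0 < y (lift ord0 j) by apply: y_incr.
have dom t : - y ord0 < t -> forall j, 0 < t + y j.
  move=> t_gt j; apply: lt_le_trans (_ : 0 < t + y ord0) _; first by rewrite -ltrBlDr sub0r.
  by rewrite lerD2l; apply: incr_ord_le.
have x0_gt : - y ord0 < x ord0 by have := xy_gt0 ord0 ord0; lra.
have [t0 /andP[t0_gt t0_le] comb_t0] := pow_comb_gt0_near_pole s_gt0 C0_gt0 y_gt x0_gt.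
have [t1 t1_in comb_t1] : exists2 t1, t1 \in `[t0, x ord0] & pow_comb s C y t1 = 0.
  apply: IVT => //; last by rewrite ge_min comb_le0 orbT le_max (ltW comb_t0).
  apply: derivable_within_continuous => t; rewrite in_itv /= => /andP[t_ge _].
  by have [] := is_derive_pow_comb s C (dom t (lt_le_trans t0_gt t_ge)).
move: t1_in; rewrite in_itv /= => /andP[t1_ge t1_le].
suff C0 : C ord0 = 0 by move: C0_gt0; rewrite C0 ltxx.
apply: (pow_comb_roots_eq0 (z := xt t1) s_gt0 (incr_ord_inj y_incr)) => [i j ij|i j|i].
- have j0 : j != ord0 by apply: contraTneq ij => ->.
  rewrite /xt (negbTE j0); case: eqP => [i0|_]; last exact: x_incr.
  by move: ij; rewrite i0 => /x_incr; apply: le_lt_trans.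
- rewrite /xt; case: eqP => _; last exact: xy_gt0.
  by apply: dom; apply: lt_le_trans t0_gt t1_ge.
- by rewrite /xt; case: eqP => [_|/eqP i0]; [exact: comb_t1 | exact: C_roots].
Qed.

End CauchyPowerKernel.

Section DetRowOps.
Variable R : comPzRingType.

Lemma det_subr_row n (A : 'M[R]_n) (i1 i2 : 'I_n) : i1 != i2 ->
  \det A = \det (\matrix_(i, j) if i == i1 then A i1 j - A i2 j else A i j).
Proof.
move=> i12; set B := \matrix_(i, j) _.
pose C := \matrix_(i, j) if i == i1 then A i2 j else A i j.
have detC : \det C = 0.
  by apply: (determinant_alternate i12) => j; rewrite !mxE eqxx eq_sym (negbTE i12).
rewrite (@determinant_multilinear _ _ A B C i1 1 1) ?detC ?mulr0 ?addr0 ?mul1r //.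
- by apply/rowP => j; rewrite !mxE eqxx !mul1r subrK.
- by apply/matrixP => a b; rewrite !mxE eq_sym (negbTE (neq_lift _ _)).
- by apply/matrixP => a b; rewrite !mxE eq_sym (negbTE (neq_lift _ _)).
Qed.

Lemma det_row0_pivot n (A : 'M[R]_n.+1) : (forall j, j != ord0 -> A ord0 j = 0) ->
  \det A = A ord0 ord0 * \det (row' ord0 (col' ord0 A)).
Proof.
move=> A0; rewrite (expand_det_row _ ord0) big_ord_recl big1 ?addr0.
  by rewrite /cofactor /= expr0 mul1r.
by move=> j _; rewrite A0 ?mul0r // eq_sym neq_lift.
Qed.

Lemma det_scale_rows_cols k (K : 'M[R]_k) (u v : 'I_k -> R) :
  \det (\matrix_(i, j) (u i * v j * K i j)) = (\prod_i u i) * (\prod_i v i) * \det K.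
Proof.
have -> : \matrix_(i, j) (u i * v j * K i j) =
    diag_mx (\row_i u i) *m K *m diag_mx (\row_j v j).
  by apply/matrixP => i j; rewrite mul_mx_diag mul_diag_mx !mxE mulrAC mulrC.
rewrite !det_mulmx !det_diag.
under eq_bigr do rewrite mxE.
under [X in _ * _ * X = _]eq_bigr do rewrite mxE.
by rewrite mulrAC.
Qed.

End DetRowOps.

Section MinKernel.
Variable R : realType.

Lemma det_min_ge0_step m (a b : 'I_m.+2 -> R) :
  {homo a : i j / (i <= j)%N >-> j <= i} -> {homo b : i j / (i <= j)%N >-> j <= i} ->
  b (lift ord0 ord0) <= a (lift ord0 ord0) ->
  0 <= \det (\matrix_(i, j) Num.min (a (lift ord0 i)) (b (lift ord0 j))) ->
  0 <= \det (\matrix_(i, j) Num.min (a i) (b j)).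
Proof.
move=> a_decr b_decr b1_le det_ge0; pose e : 'I_m.+2 := lift ord0 ord0.
have row01 j : j != ord0 -> Num.min (a ord0) (b j) = Num.min (a e) (b j).
  move=> j0; have bj : b j <= b e by apply: b_decr; rewrite lt0n.
  by rewrite !min_r // (le_trans bj) // (le_trans b1_le) //; apply: a_decr.
rewrite (det_subr_row _ (neq_lift ord0 ord0)) det_row0_pivot.
  rewrite !mxE eqxx mulr_ge0 // ?subr_ge0.
    by rewrite le_min !ge_min lexx orbT andbT a_decr.
  move: det_ge0; congr (0 <= \det _); apply/matrixP => i j.
  by rewrite !mxE eq_sym (negbTE (neq_lift _ _)).
by move=> j j0; rewrite !mxE eqxx row01 ?subrr.
Qed.

Lemma det_min_ge0 k : forall (a b : 'I_k -> R),
  (forall i, 0 <= a i) -> (forall j, 0 <= b j) ->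
  {homo a : i j / (i <= j)%N >-> j <= i} -> {homo b : i j / (i <= j)%N >-> j <= i} ->
  0 <= \det (\matrix_(i, j) Num.min (a i) (b j)).
Proof.
elim: k => [|[|m] IH] a b a_ge0 b_ge0 a_decr b_decr; first by rewrite det_mx00.
  by rewrite det_mx11 mxE le_min a_ge0 b_ge0.
have lift_le (i j : 'I_m.+1) : (i <= j)%N -> (lift ord0 i <= lift ord0 j)%N.
  by rewrite /= /bump !add1n.
case: (leP (b (lift ord0 ord0)) (a (lift ord0 ord0))) => [ba|/ltW ab].
  apply: det_min_ge0_step => //.
  by apply: IH => // i j ij; [apply: a_decr | apply: b_decr]; apply: lift_le.
rewrite -det_tr (_ : _^T = \matrix_(i, j) Num.min (b i) (a j)); last first.
  by apply/matrixP => i j; rewrite !mxE minC.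
apply: det_min_ge0_step => //.
by apply: IH => // i j ij; [apply: b_decr | apply: a_decr]; apply: lift_le.
Qed.

End MinKernel.

Section TotalPositivity.
Variable R : realType.

Lemma strictly_incr_le n k (f : 'I_k -> 'I_n) : strictly_incr f ->
  {homo f : i j / (i <= j)%N}.
Proof. by move=> f_incr i j; rewrite leq_eqVlt => /orP[/eqP/val_inj -> // | /f_incr/ltnW]. Qed.

Lemma totally_positive_cauchy_powR n (A : 'M[R]_n) (u v x : 'I_n -> R) (s : R) :
  0 < s -> (forall i, 0 < u i) -> (forall i, 0 < v i) -> (forall i, 0 < x i) ->
  {homo x : i j / (i < j)%N >-> i < j} ->
  (forall i j, A i j = u i * v j * powR (x i + x j) (-s)) -> totally_positive A.
Proof.
move=> s_gt0 u_gt0 v_gt0 x_gt0 x_incr A_def k f g _ f_incr g_incr.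
rewrite /minor (_ : \matrix_(i, j) _ = \matrix_(i, j) (u (f i) * v (g j) *
    cauchy_powR s (x \o f) (x \o g) i j)); last by apply/matrixP => i j; rewrite !mxE A_def.
rewrite det_scale_rows_cols !mulr_gt0 ?prodr_gt0 //.
apply: det_cauchy_powR_gt0 => // [i j /f_incr/x_incr | i j /g_incr/x_incr | i j] //.
exact: addr_gt0 (x_gt0 _) (x_gt0 _).
Qed.

Lemma totally_nonnegative_rank1 n (A : 'M[R]_n) (u : 'I_n -> R) :
  (forall i, 0 <= u i) -> (forall i j, A i j = u i * u j) -> totally_nonnegative A.
Proof.
move=> u_ge0 A_def k f g _ _ _.
rewrite /minor (_ : \matrix_(i, j) _ = \matrix_(i, j) (u (f i) * u (g j) *
    const_mx 1 i j)); last by apply/matrixP => i j; rewrite !mxE A_def mulr1.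
rewrite det_scale_rows_cols !mulr_ge0 ?prodr_ge0 //.
case: k f g => [|[|k]] f g; first by rewrite det_mx00.
  by rewrite det_mx11 mxE.
by rewrite (determinant_alternate (neq_lift ord0 ord0)) // => j; rewrite !mxE.
Qed.

Lemma totally_nonnegative_min n (A : 'M[R]_n) (w : 'I_n -> R) :
  (forall i, 0 <= w i) -> {homo w : i j / (i <= j)%N >-> j <= i} ->
  (forall i j, A i j = Num.min (w i) (w j)) -> totally_nonnegative A.
Proof.
move=> w_ge0 w_decr A_def k f g _ f_incr g_incr.
rewrite /minor (_ : \matrix_(i, j) _ = \matrix_(i, j) Num.min (w (f i)) (w (g j)));
  last by apply/matrixP => i j; rewrite !mxE A_def.
apply: det_min_ge0 => // i j ij; apply: w_decr;
  [exact: strictly_incr_le f_incr _ _ ij | exact: strictly_incr_le g_incr _ _ ij].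
Qed.

End TotalPositivity.

Section MeanMatrices.
Variables (R : realType) (n : nat) (lam : 'I_n -> R) (r : R).
Hypothesis lam_gt0 : forall i, 0 < lam i.
Hypothesis lam_incr : {homo lam : i j / (i < j)%N >-> i < j}.
Hypothesis r_gt0 : 0 < r.

Let lam_ge0 i : 0 <= lam i := ltW (lam_gt0 i).

Lemma powR_lam_incr (e : R) : 0 < e ->
  {homo (fun i => powR (lam i) e) : i j / (i < j)%N >-> i < j}.
Proof. by move=> e_gt0 i j ij; apply: gt0_ltr_powR; rewrite ?nnegrE ?lam_incr. Qed.

Lemma totally_positive_amean :
  totally_positive (\matrix_(i, j) (powR (amean (lam i) (lam j)) r)^-1).
Proof.
apply: (totally_positive_cauchy_powR (s := r) (x := lam)
  (u := fun=> powR 2^-1 (-r)) (v := fun=> 1)) => // [_|i j].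
  by apply: powR_gt0; rewrite invr_gt0.
by rewrite mxE /amean -powRN powRM ?addr_ge0 ?invr_ge0 // mulr1 mulrC.
Qed.

Lemma totally_positive_hmean :
  totally_positive (\matrix_(i, j) powR (hmean (lam i) (lam j)) r).
Proof.
apply: (totally_positive_cauchy_powR (s := r) (x := lam)
  (u := fun i => powR (2 * lam i) r) (v := fun j => powR (lam j) r)) => // [i|i|i j].
- by apply: powR_gt0; rewrite mulr_gt0.
- exact: powR_gt0.
rewrite mxE /hmean !powRM ?mulr_ge0 ?invr_ge0 ?addr_ge0 //.
by rewrite -powR_inv1 ?addr_ge0 // -powRrM mulN1r.
Qed.

Lemma heinz1N (nu a b : R) : heinz (1 - nu) a b = heinz nu a b.
Proof. by rewrite /heinz subKr addrC. Qed.

Lemma heinz_factor (nu a b : R) : 0 < a -> 0 < b ->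
  heinz nu a b = powR a nu * 2^-1 * powR b nu * (powR a (1 - 2 * nu) + powR b (1 - 2 * nu)).
Proof.
move=> a_gt0 b_gt0; rewrite /heinz.
have -> : 1 - nu = nu + (1 - 2 * nu) by ring.
by rewrite !powRD ?(gt_eqF a_gt0) ?(gt_eqF b_gt0) ?implybT //; ring.
Qed.

Lemma totally_positive_heinz (nu : R) : 0 <= nu <= 1 -> nu != 2^-1 ->
  totally_positive (\matrix_(i, j) (powR (heinz nu (lam i) (lam j)) r)^-1).
Proof.
wlog nu_lt : nu / nu < 2^-1 => [hwlog|].
  move=> nu01 nu_half; move: (nu_half); rewrite neq_lt => /orP[nu_lt|nu_gt].
    exact: hwlog.
  have -> : \matrix_(i, j) (powR (heinz nu (lam i) (lam j)) r)^-1 =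
      \matrix_(i, j) (powR (heinz (1 - nu) (lam i) (lam j)) r)^-1.
    by apply/matrixP => i j; rewrite !mxE heinz1N.
  move: nu01 => /andP[nu0 nu1].
  by apply: hwlog; rewrite ?neq_lt; [lra | apply/andP; split; lra | apply/orP; left; lra].
move=> _ _.
apply: (totally_positive_cauchy_powR (s := r) (x := fun i => powR (lam i) (1 - 2 * nu))
  (u := fun i => powR (powR (lam i) nu) (-r) * powR 2^-1 (-r))
  (v := fun j => powR (powR (lam j) nu) (-r))) => // [i|i|i||i j].
- by rewrite mulr_gt0 ?powR_gt0 ?invr_gt0.
- by rewrite !powR_gt0.
- by rewrite powR_gt0.
- by apply: powR_lam_incr; lra.
rewrite mxE heinz_factor // -powRN.
by rewrite !powRM ?mulr_ge0 ?addr_ge0 ?powR_ge0 ?invr_ge0.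
Qed.

Lemma totally_positive_binmean (alpha : R) : 0 < alpha ->
  totally_positive (\matrix_(i, j) (powR (binmean alpha (lam i) (lam j)) r)^-1).
Proof.
move=> alpha_gt0.
apply: (totally_positive_cauchy_powR (s := alpha^-1 * r) (x := fun i => powR (lam i) alpha)
  (u := fun=> powR 2^-1 (- (alpha^-1 * r))) (v := fun=> 1)) => // [|_|i||i j].
- by rewrite mulr_gt0 ?invr_gt0.
- by rewrite powR_gt0 ?invr_gt0.
- exact: powR_gt0.
- exact: powR_lam_incr.
rewrite mxE /binmean -powRrM -powRN.
by rewrite powRM ?addr_ge0 ?powR_ge0 ?invr_ge0 // mulr1 mulrC.
Qed.

Lemma totally_nonnegative_binmean0 :
  totally_nonnegative (\matrix_(i, j) (powR (binmean0 (lam i) (lam j)) r)^-1).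
Proof.
apply: (totally_nonnegative_rank1 (u := fun i => powR (Num.sqrt (lam i)) (-r))) => [i|i j].
  exact: powR_ge0.
by rewrite mxE /binmean0 sqrtrM // -powRN powRM ?sqrtr_ge0.
Qed.

Lemma heinz_half (a b : R) : 0 <= a -> 0 <= b -> heinz 2^-1 a b = binmean0 a b.
Proof.
move=> a_ge0 b_ge0; rewrite /heinz; have -> : 1 - 2^-1 = 2^-1 :> R by field.
by rewrite /binmean0 !powR12_sqrt // sqrtrM //; field.
Qed.

Lemma totally_nonnegative_heinz_half :
  totally_nonnegative (\matrix_(i, j) (powR (heinz 2^-1 (lam i) (lam j)) r)^-1).
Proof.
rewrite (_ : \matrix_(i, j) _ = \matrix_(i, j) (powR (binmean0 (lam i) (lam j)) r)^-1).
  exact: totally_nonnegative_binmean0.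
by apply/matrixP => i j; rewrite !mxE heinz_half.
Qed.

Lemma totally_nonnegative_binmeanInf :
  totally_nonnegative (\matrix_(i, j) (powR (binmeanInf (lam i) (lam j)) r)^-1).
Proof.
have powR_decr := powRN_le (ltW r_gt0) (lam_gt0 _).
apply: (totally_nonnegative_min (w := fun i => powR (lam i) (-r))) => [i|i j ij|i j].
- exact: powR_ge0.
- exact/powR_decr/incr_ord_le.
rewrite mxE /binmeanInf -powRN; case: leP => [ij|/ltW ji].
  by rewrite min_r // powR_decr.
by rewrite min_l // powR_decr.
Qed.

End MeanMatrices.

Theorem theorem3p2 (R : realType) (n : nat) (lam : 'I_n -> R) (r : R) :
  (forall i, 0 < lam i) ->
  (forall i j : 'I_n, (i < j)%N -> lam i < lam j) ->
  0 < r ->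
  totally_positive (\matrix_(i, j) (powR (amean (lam i) (lam j)) r)^-1) /\
      totally_positive (\matrix_(i, j) powR (hmean (lam i) (lam j)) r) /\
      (forall nu : R, 0 <= nu <= 1 -> nu != 2^-1 ->
         totally_positive (\matrix_(i, j) (powR (heinz nu (lam i) (lam j)) r)^-1)) /\
      (forall alpha : R, 0 < alpha ->
         totally_positive (\matrix_(i, j) (powR (binmean alpha (lam i) (lam j)) r)^-1)) /\
      totally_nonnegative (\matrix_(i, j) (powR (heinz 2^-1 (lam i) (lam j)) r)^-1) /\
      totally_nonnegative (\matrix_(i, j) (powR (binmean0 (lam i) (lam j)) r)^-1) /\
      totally_nonnegative (\matrix_(i, j) (powR (binmeanInf (lam i) (lam j)) r)^-1).
Proof.
move=> lam_gt0 lam_incr r_gt0.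
do ![split]; [ exact: totally_positive_amean | exact: totally_positive_hmean
  | exact: totally_positive_heinz | exact: totally_positive_binmean
  | exact: totally_nonnegative_heinz_half | exact: totally_nonnegative_binmean0
  | exact: totally_nonnegative_binmeanInf ].
Qed.
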